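(* Let $\Gamma$ be a typing context, ${\mathcal K}$ a consistent set of constraints, $\tau$ a type, $t$ a term of type $\tau$ and $s \in \mathit{not}[\tau](t)$. Let $u$ be a term with $FV(u)\subseteq \Gamma$, and let $\vec X{:}\vec\tau$ be a list of typed variables with $FV(s)\cup FV(t)\subseteq \vec X$. Then it is not the case that both $\Gamma;{\mathcal K}\models \exists \vec X{:}\vec\tau.~u\approx t$ and $\Gamma;{\mathcal K}\models \exists \vec X{:}\vec\tau.~u\approx s$.
   Context: Setting: nominal logic terms over a signature consisting of base types $\delta$, name types $\nu$, and function symbols $f:\tau\to\delta$. Types: $\tau ::= \delta \mid \tau\times\tau' \mid \mathbf{1} \mid \nu \mid \langle\nu\rangle\tau$ (the last is the abstraction type). Terms: $t,u ::= \mathsf{a} \mid \pi\cdot X \mid \langle\rangle \mid \langle t,u\rangle \mid \langle\mathsf{a}\rangle t \mid f(t)$, where $\mathsf{a}$ ranges over names, $X$ over logic variables, and $\pi$ over finite permutations of names (composites of swappings $(\mathsf{a}\ \mathsf{b})$); $\langle\mathsf{a}\rangle t$ is name-abstraction. Ground equality $\approx$ is equality modulo $\alpha$-equivalence of abstractions (i.e. $\langle\mathsf{a}\rangle t\approx\langle\mathsf{b}\rangle u$ iff $\mathsf{a}=\mathsf{b}$ and $t\approx u$, or $\mathsf{a}$ is distinct from $\mathsf{b}$, $\mathsf{a}$ is not free in $u$, and $t\approx (\mathsf{a}\ \mathsf{b})\cdot u$), and componentwise otherwise; freshness $\mathsf{a}\mathrel{\#} t$ means $\mathsf{a}$ does not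 occur free in $t$. Constraints: $C ::= \top \mid t\approx u \mid t\mathrel{\#}u \mid C\wedge C' \mid \exists X{:}\tau.~C \mid \text{И}\mathsf{a}{:}\nu.~C$. For a map $\theta$ from variables to ground terms: $\theta\models t\approx u$ iff $\theta(t)\approx\theta(u)$; $\theta\models t\mathrel{\#}u$ iff $\theta(t)\mathrel{\#}\theta(u)$; conjunction as usual; $\theta\models\exists X{:}\tau.C$ iff for some ground $t:\tau$, $\theta[X:=t]\models C$; $\theta\models \text{И}\mathsf{a}{:}\nu.C$ iff for some name $\mathsf{b}$ fresh for $\theta$ and $C$, $\theta\models C[\mathsf{b}/\mathsf{a}]$. A context $\Gamma$ is a list of typed variable and name bindings. $\Gamma;{\mathcal K}\models C$ means: for every map $\theta$ from the variables of $\Gamma$ to ground terms, if $\theta$ satisfies every constraint in ${\mathcal K}$ then $\theta\models C$. ${\mathcal K}$ is consistent if some such $\theta$ satisfies all of ${\mathcal K}$. Term complementation $\mathit{not}[\tau]$ maps a term of type $\tau$ to a finite set of terms of type $\tau$, where each occurrence of $\_$ denotes a fresh (anonymous) variable: $\mathit{not}[\tau](t)=\emptyset$ if $\tau\in\{\mathbf{1},\nu,\langle\nu\rangle\tau'\}$ or $t$ is a variable; $\mathit{not}[\tau_1\times\tau_2](\langle t_1,t_2\rangle)=\{\langle s_1,\_\rangle \mid s_1\in\mathit{not}[\tau_1](t_1)\}\cup\{\langle\_,s_2\rangle\mid s_2\in\mathit{not}[\tau_2](t_2)\}$; for $f:\tau\to\delta$, $\mathit{not}[\delta](f(t))=\{g(\_)\mid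 g:\sigma\to\delta \text{ a function symbol}, g\neq f\}\cup\{f(s)\mid s\in \mathit{not}[\tau](t)\}$. *)

From Stdlib Require Import List Arith.
Import ListNotations.
Set Implicit Arguments.

Inductive ty (BT NT : Type) : Type :=
| TBase (d : BT)
| TProd (t1 t2 : ty BT NT)
| TUnit
| TName (n : NT)
| TAbs (n : NT) (t : ty BT NT).
Arguments TBase {BT NT} d.
Arguments TProd {BT NT} t1 t2.
Arguments TUnit {BT NT}.
Arguments TName {BT NT} n.
Arguments TAbs {BT NT} n t.

Record signature := {
  btype : Type;
  ntype : Type;
  ntype_eq_dec : forall a b : ntype, {a = b} + {a <> b};
  fsym : Type;
  fdom : fsym -> ty btype ntype;
  fcod : fsym -> btype
}.

Section Nominal.
Variable S : signature.

Definition sty := ty (btype S) (ntype S).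

(* Names: for each name type infinitely many names (sort, index). *)
Definition name := (ntype S * nat)%type.
Definition var := nat.

Definition name_eq_dec (a b : name) : {a = b} + {a <> b}.
Proof. decide equality; [apply Nat.eq_dec | apply ntype_eq_dec]. Defined.

(* Finite permutations as composites of swappings (a1 b1) o ... o (an bn). *)
Definition perm := list (name * name).
Definition swap_name (a b c : name) : name :=
  if name_eq_dec c a then b else if name_eq_dec c b then a else c.
Definition perm_name (p : perm) (c : name) : name :=
  fold_right (fun ab c => swap_name (fst ab) (snd ab) c) c p.

Inductive term : Type :=
| TmName (a : name)
| TmSusp (p : perm) (X : var)
| TmUnit
| TmPair (t u : term)
| TmAbs (a : name) (t : term)
| TmApp (f : fsym S) (t : term).

Fixpoint perm_tm (p : perm) (t : term) : term :=
  match t with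
  | TmName a => TmName (perm_name p a)
  | TmSusp q X => TmSusp (p ++ q) X
  | TmUnit => TmUnit
  | TmPair t1 t2 => TmPair (perm_tm p t1) (perm_tm p t2)
  | TmAbs a t1 => TmAbs (perm_name p a) (perm_tm p t1)
  | TmApp f t1 => TmApp f (perm_tm p t1)
  end.

Fixpoint subst (th : var -> term) (t : term) : term :=
  match t with
  | TmName a => TmName a
  | TmSusp q X => perm_tm q (th X)
  | TmUnit => TmUnit
  | TmPair t1 t2 => TmPair (subst th t1) (subst th t2)
  | TmAbs a t1 => TmAbs a (subst th t1)
  | TmApp f t1 => TmApp f (subst th t1)
  end.

Fixpoint fv (t : term) : list var :=
  match t with
  | TmName _ => []
  | TmSusp _ X => [X]
  | TmUnit => []
  | TmPair t1 t2 => fv t1 ++ fv t2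
  | TmAbs _ t1 => fv t1
  | TmApp _ t1 => fv t1
  end.

Definition ground (t : term) : Prop := fv t = [].

Fixpoint free_in (a : name) (t : term) : Prop :=
  match t with
  | TmName b => a = b
  | TmSusp _ _ => False
  | TmUnit => False
  | TmPair t1 t2 => free_in a t1 \/ free_in a t2
  | TmAbs b t1 => a <> b /\ free_in a t1
  | TmApp _ t1 => free_in a t1
  end.

Inductive aeq : term -> term -> Prop :=
| AEq_name a : aeq (TmName a) (TmName a)
| AEq_unit : aeq TmUnit TmUnit
| AEq_pair t1 t2 u1 u2 : aeq t1 u1 -> aeq t2 u2 -> aeq (TmPair t1 t2) (TmPair u1 u2)
| AEq_app f t u : aeq t u -> aeq (TmApp f t) (TmApp f u)
| AEq_abs_same a t u : aeq t u -> aeq (TmAbs a t) (TmAbs a u)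
| AEq_abs_diff a b t u :
    a <> b -> ~ free_in a u -> aeq t (perm_tm [(a, b)] u) ->
    aeq (TmAbs a t) (TmAbs b u).

Fixpoint occurs_tm (b : name) (t : term) : Prop :=
  match t with
  | TmName a => a = b
  | TmSusp q _ => exists ab, In ab q /\ (fst ab = b \/ snd ab = b)
  | TmUnit => False
  | TmPair t1 t2 => occurs_tm b t1 \/ occurs_tm b t2
  | TmAbs a t1 => a = b \/ occurs_tm b t1
  | TmApp _ t1 => occurs_tm b t1
  end.

(* Renaming of the name a into b (names are constants of the constraint language). *)
Definition rn (a b c : name) : name := if name_eq_dec c a then b else c.
Fixpoint ren_tm (a b : name) (t : term) : term :=
  match t with
  | TmName c => TmName (rn a b c)
  | TmSusp q X => TmSusp (map (fun cd => (rn a b (fst cd), rn a b (snd cd))) q) X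
  | TmUnit => TmUnit
  | TmPair t1 t2 => TmPair (ren_tm a b t1) (ren_tm a b t2)
  | TmAbs c t1 => TmAbs (rn a b c) (ren_tm a b t1)
  | TmApp f t1 => TmApp f (ren_tm a b t1)
  end.

(* Typing contexts (variable bindings; names carry their sort intrinsically). *)
Definition ctx := list (var * sty).
Fixpoint lookup (G : ctx) (X : var) : option sty :=
  match G with
  | [] => None
  | (Y, T) :: G' => if Nat.eq_dec X Y then Some T else lookup G' X
  end.

Definition perm_ok (p : perm) : Prop :=
  forall ab, In ab p -> fst (fst ab) = fst (snd ab).

Inductive has_type (G : ctx) : term -> sty -> Prop :=
| HT_name a : has_type G (TmName a) (TName (fst a))
| HT_susp p X T : perm_ok p -> lookup G X = Some T -> has_type G (TmSusp p X) T
| HT_unit : has_type G TmUnit TUnit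
| HT_pair t u T U : has_type G t T -> has_type G u U -> has_type G (TmPair t u) (TProd T U)
| HT_abs a t T : has_type G t T -> has_type G (TmAbs a t) (TAbs (fst a) T)
| HT_app f t : has_type G t (fdom S f) -> has_type G (TmApp f t) (TBase (fcod S f)).

(* Constraints  C ::= T | t ~ u | t # u | C /\ C' | exists X:tau. C | new a:nu. C
   (the sort nu of the new-bound name a is the sort of a). *)
Inductive constr : Type :=
| CTop
| CEq (t u : term)
| CFresh (t u : term)
| CAnd (C1 C2 : constr)
| CEx (X : var) (T : sty) (C : constr)
| CNew (a : name) (C : constr).

Fixpoint occurs_c (b : name) (C : constr) : Prop :=
  match C with
  | CTop => False
  | CEq t u | CFresh t u => occurs_tm b t \/ occurs_tm b u
  | CAnd C1 C2 => occurs_c b C1 \/ occurs_c b C2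
  | CEx _ _ C1 => occurs_c b C1
  | CNew a C1 => a = b \/ occurs_c b C1
  end.

Fixpoint ren_c (a b : name) (C : constr) : constr :=
  match C with
  | CTop => CTop
  | CEq t u => CEq (ren_tm a b t) (ren_tm a b u)
  | CFresh t u => CFresh (ren_tm a b t) (ren_tm a b u)
  | CAnd C1 C2 => CAnd (ren_c a b C1) (ren_c a b C2)
  | CEx X T C1 => CEx X T (ren_c a b C1)
  | CNew c C1 => CNew (rn a b c) (ren_c a b C1)
  end.

Definition upd (th : var -> term) (X : var) (g : term) : var -> term :=
  fun Y => if Nat.eq_dec Y X then g else th Y.

(* theta |= C, where D is the (finite) domain of theta. *)
Inductive sat : list var -> (var -> term) -> constr -> Prop :=
| Sat_top D th : sat D th CTop
| Sat_eq D th t u : aeq (subst th t) (subst th u) -> sat D th (CEq t u)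
| Sat_fresh D th t u a :
    subst th t = TmName a -> ~ free_in a (subst th u) -> sat D th (CFresh t u)
| Sat_and D th C1 C2 : sat D th C1 -> sat D th C2 -> sat D th (CAnd C1 C2)
| Sat_ex D th X T C g :
    ground g -> has_type [] g T -> sat (X :: D) (upd th X g) C -> sat D th (CEx X T C)
| Sat_new D th a b C :
    fst b = fst a ->
    (forall Y, In Y D -> ~ free_in b (th Y)) ->
    ~ occurs_c b C ->
    sat D th (ren_c a b C) -> sat D th (CNew a C).

Definition wt_subst (G : ctx) (th : var -> term) : Prop :=
  forall X T, lookup G X = Some T -> ground (th X) /\ has_type [] (th X) T.

Definition entails (G : ctx) (K : list constr) (C : constr) : Prop :=
  forall th, wt_subst G th ->
    (forall k, In k K -> sat (map fst G) th k) -> sat (map fst G) th C.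

Definition consistent (G : ctx) (K : list constr) : Prop :=
  exists th, wt_subst G th /\ (forall k, In k K -> sat (map fst G) th k).

Definition ex_many (Xs : ctx) (C : constr) : constr :=
  fold_right (fun XT C => CEx (fst XT) (snd XT) C) C Xs.

(* Term complementation not[tau](t), as patterns whose holes PHole T stand for
   the anonymous variables "_" (T = the type of the hole). *)
Inductive pat : Type :=
| PHole (T : sty)
| PPair (p1 p2 : pat)
| PApp (f : fsym S) (p : pat).

Inductive not_pat : sty -> term -> pat -> Prop :=
| NP_pair_l T1 T2 t1 t2 p :
    not_pat T1 t1 p -> not_pat (TProd T1 T2) (TmPair t1 t2) (PPair p (PHole T2))
| NP_pair_r T1 T2 t1 t2 p :
    not_pat T2 t2 p -> not_pat (TProd T1 T2) (TmPair t1 t2) (PPair (PHole T1) p)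
| NP_app_other f g t :
    fcod S g = fcod S f -> g <> f ->
    not_pat (TBase (fcod S f)) (TmApp f t) (PApp g (PHole (fdom S g)))
| NP_app_same f t p :
    not_pat (fdom S f) t p -> not_pat (TBase (fcod S f)) (TmApp f t) (PApp f p).

Inductive fill (G : ctx) : pat -> term -> list var -> Prop :=
| Fill_hole T Y : lookup G Y = Some T -> fill G (PHole T) (TmSusp [] Y) [Y]
| Fill_pair p1 p2 s1 s2 v1 v2 :
    fill G p1 s1 v1 -> fill G p2 s2 v2 -> fill G (PPair p1 p2) (TmPair s1 s2) (v1 ++ v2)
| Fill_app f p s v : fill G p s v -> fill G (PApp f p) (TmApp f s) v.

Definition not_mem (G : ctx) (T : sty) (t s : term) : Prop :=
  exists p vs, not_pat T t p /\ fill G p s vs /\ NoDup vs /\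
               (forall Y, In Y vs -> ~ In Y (fv t)).

End Nominal.

(* A complement pattern of [t] differs from [t] at some pair or function-symbol
   node, and alpha-equivalence preserves these constructors, so no term is
   alpha-equivalent to an instance of [t] and to an instance of a filling of the
   pattern.  Given a valuation of Gamma satisfying K, both entailments produce such
   instances alpha-equivalent to the common value of [u], which does not depend on
   the existentially bound variables. *)

From Stdlib Require Import List Arith.
Import ListNotations.
Set Implicit Arguments.
Unset Strict Implicit.

Lemma NoDup_app_disjoint (A : Type) (l1 l2 : list A) (a : A) :
  NoDup (l1 ++ l2) -> In a l1 -> ~ In a l2.
Proof.
  intros Hnd Ha Ha2.
  destruct (in_split a l1 Ha) as (l1a & l1b & ->).
  rewrite <- app_assoc in Hnd; simpl in Hnd.
  apply (NoDup_remove_2 _ _ _ Hnd).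
  rewrite app_assoc; apply in_or_app; now right.
Qed.

Section Nominal.
Variable S : signature.

Lemma subst_ext (t : term S) (th1 th2 : var -> term S) :
  (forall Y, In Y (fv t) -> th1 Y = th2 Y) -> subst th1 t = subst th2 t.
Proof.
  revert th1 th2.
  induction t; simpl; intros th1 th2 Heq; try reflexivity.
  - now rewrite Heq by now left.
  - rewrite (@IHt1 th1 th2), (@IHt2 th1 th2); auto;
      intros; apply Heq; apply in_or_app; auto.
  - now rewrite (@IHt th1 th2).
  - now rewrite (@IHt th1 th2).
Qed.

Lemma sat_ex_many_inv (Xs : ctx S) (D : list var) (th : var -> term S)
    (C : constr S) :
  sat D th (ex_many Xs C) ->
  exists D' th', sat D' th' C /\
    forall Y, ~ In Y (map fst Xs) -> th' Y = th Y.
Proof.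
  revert D th.
  induction Xs as [|[X T] Xs IH]; simpl; intros D th Hsat.
  - now exists D, th.
  - inversion Hsat; subst.
    destruct (IH _ _ H6) as (D' & th' & Hsat' & Hagree).
    exists D', th'; split; [exact Hsat'|].
    intros Y HY. rewrite Hagree by tauto.
    unfold upd; destruct (Nat.eq_dec Y X); subst; tauto.
Qed.

Lemma sat_ex_many_eq_inv (Xs : ctx S) (D : list var) (th : var -> term S)
    (u v : term S) :
  (forall Y, In Y (fv u) -> ~ In Y (map fst Xs)) ->
  sat D th (ex_many Xs (CEq u v)) ->
  exists th', aeq (subst th u) (subst th' v).
Proof.
  intros Hu Hsat.
  destruct (sat_ex_many_inv Hsat) as (D' & th' & Heq & Hagree).
  inversion Heq; subst.
  exists th'; rewrite (@subst_ext u th th'); auto.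
  intros Y HY; symmetry; auto.
Qed.

Lemma not_pat_fill_no_common_instance (G : ctx S) (T : sty S) (t : term S)
    (p : pat S) (s w : term S) (vs : list var) (th1 th2 : var -> term S) :
  not_pat T t p -> fill G p s vs ->
  aeq w (subst th1 t) -> aeq w (subst th2 s) -> False.
Proof.
  intros Hp; revert s w vs th1 th2.
  induction Hp; intros s w vs th1 th2 Hf Ht Hs;
    inversion Hf; subst; simpl in *; inversion Ht; subst; inversion Hs; subst;
    eauto; congruence.
Qed.

End Nominal.

Theorem lemma1 (S : signature) (G : ctx S) (K : list (constr S)) (T : sty S)
    (t s u : term S) (Xs : ctx S) :
  NoDup (map fst (G ++ Xs)) ->
  consistent G K ->
  has_type (G ++ Xs) t T ->
  not_mem (G ++ Xs) T t s ->
  incl (fv u) (map fst G) ->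
  incl (fv s ++ fv t) (map fst Xs) ->
  ~ (entails G K (ex_many Xs (CEq u t)) /\ entails G K (ex_many Xs (CEq u s))).
Proof.
  intros Hnd [th [Hwt HK]] _ (p & vs & Hp & Hf & _) Hu _ [Et Es].
  assert (Hu_bound : forall Y, In Y (fv u) -> ~ In Y (map fst Xs)).
  { intros Y HY. rewrite map_app in Hnd.
    exact (NoDup_app_disjoint Hnd (Hu Y HY)). }
  destruct (sat_ex_many_eq_inv Hu_bound (Et th Hwt HK)) as [th1 Ht].
  destruct (sat_ex_many_eq_inv Hu_bound (Es th Hwt HK)) as [th2 Hs].
  exact (not_pat_fill_no_common_instance Hp Hf Ht Hs).
Qed.
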